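(* Let $f,g$ satisfy (H1) (see context). For $\theta,H\in\Theta$ and $\gamma>0$ set $S_\gamma(\theta)=\mathrm{Prox}_\gamma(\theta-\gamma H)$ and $\eta=H-\nabla f(\theta)$. Then for any $\theta,H\in\Theta$ and $\gamma>0$, $\|T_\gamma(\theta)-S_\gamma(\theta)\|\le\gamma\|\eta\|$. Moreover, for any $\theta,H\in\Theta$ and $\gamma\in(0,1/L]$, $$|F(S_\gamma(\theta))-F(T_\gamma(\theta))|\le(1+c\gamma L)\|\eta\|\big(\gamma\|\eta\|+(1+c\gamma L)\|\theta-T_\gamma(\theta)\|\big),$$ where $c=0$ if $f$ is convex and $c=1$ otherwise.
   Context: $\Theta$ is a finite-dimensional Euclidean space with norm $\|\cdot\|$. (H1): $g:\Theta\to(-\infty,+\infty]$ convex, not identically $+\infty$, lower semicontinuous; $f:\Theta\to\mathbb R$ continuously differentiable with $L$-Lipschitz gradient. $F=f+g$; $\mathrm{Prox}_\gamma(\theta)=\mathrm{argmin}_{\vartheta}\{g(\vartheta)+\frac1{2\gamma}\|\vartheta-\theta\|^2\}$; $T_\gamma(\theta)=\mathrm{Prox}_\gamma(\theta-\gamma\nabla f(\theta))$. *)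

(* Theta is modelled as the Euclidean space R^n,
   realised as row vectors 'rV[R]_n with the standard inner product. *)
From HB Require Import structures.
From mathcomp Require Import all_boot all_order all_algebra.
From mathcomp Require Import all_classical all_reals all_analysis.
Set Implicit Arguments. Unset Strict Implicit. Unset Printing Implicit Defensive.
Import Order.TTheory GRing.Theory Num.Theory.
Import numFieldNormedType.Exports.
Local Open Scope ring_scope.

Section Defs.
Variables (R : realType) (n : nat).
Notation V := 'rV[R]_n.

Definition dotp (u v : V) : R := \sum_(i < n) u ord0 i * v ord0 i.
Definition enorm (v : V) : R := Num.sqrt (dotp v v).

Definition convex_fun (f : V -> R) : Prop :=
  forall (x y : V) (t : R), 0 <= t <= 1 ->
    f (t *: x + (1 - t) *: y) <= t * f x + (1 - t) * f y.

Definition convex_efun (g : V -> \bar R) : Prop :=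
  forall (x y : V) (t : R), 0 < t < 1 ->
    (g (t *: x + (1 - t) *: y)%R <= t%:E * g x + (1 - t)%R%:E * g y)%E.

Definition lsc (g : V -> \bar R) : Prop :=
  forall (x : V) (a : R), (a%:E < g x)%E ->
    \forall y \near x, (a%:E < g y)%E.

Definition proper_efun (g : V -> \bar R) : Prop :=
  (forall x, g x != -oo%E) /\ exists x, g x != +oo%E.

Definition is_gradient (f : V -> R) (grad : V -> V) : Prop :=
  forall x : V, differentiable f x /\ forall v : V, 'd f x v = dotp (grad x) v.

(* p is a point of Prox_gamma(theta) = argmin_v { g v + ||v - theta||^2/(2 gamma) } *)
Definition is_prox (g : V -> \bar R) (gamma : R) (theta p : V) : Prop :=
  forall v : V,
    (g p + (enorm (p - theta)%R ^+ 2 / (2 * gamma))%R%:E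
       <= g v + (enorm (v - theta)%R ^+ 2 / (2 * gamma))%R%:E)%E.

End Defs.

From HB Require Import structures.
From mathcomp Require Import all_boot all_order all_algebra.
From mathcomp Require Import all_classical all_reals all_analysis.
From mathcomp Require Import ring lra.
Import Order.TTheory GRing.Theory Num.Theory.
Import numFieldNormedType.Exports.
Local Open Scope ring_scope.

(* The proximal map of a convex function is firmly nonexpansive: adding the
   variational inequalities characterising two prox points gives
   |p1 - p2|^2 <= <x1 - x2, p1 - p2>.  Since T and S are prox points of inputs
   differing by gamma eta, this gives |T - S| <= gamma |eta|.
   For the objective gap, the same variational inequalities at T and at S,
   together with an upper bound f T - f S <= <grad f T, T - S> + K |T - S|^2
   (K = 2L from the descent lemma, K = 0 from the gradient inequality when f is
   convex), bound both signs of F S - F T by |eta| |w| + O(gamma |eta|^2), where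
   w = (theta - T) - gamma (grad f theta - grad f T).  Finally
   |w| <= (1 + gamma L) |theta - T| by the Lipschitz bound, and |w| <= |theta - T|
   when f is convex, by co-coercivity of the gradient. *)

Set Implicit Arguments. Unset Strict Implicit. Unset Printing Implicit Defensive.

Section InnerProduct.
Variables (R : realType) (n : nat).
Implicit Types (u v w : 'rV[R]_n) (a : R).

Lemma dotpC u v : dotp u v = dotp v u.
Proof. by apply: eq_bigr => i _; rewrite mulrC. Qed.

Lemma dotpDl u w v : dotp (u + w) v = dotp u v + dotp w v.
Proof. by rewrite /dotp -big_split; apply: eq_bigr => i _; rewrite mxE mulrDl. Qed.

Lemma dotpZl a u v : dotp (a *: u) v = a * dotp u v.
Proof. by rewrite /dotp mulr_sumr; apply: eq_bigr => i _; rewrite mxE mulrA. Qed.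

Lemma dotpNl u v : dotp (- u) v = - dotp u v.
Proof. by rewrite -scaleN1r dotpZl mulN1r. Qed.

Lemma dotpBl u w v : dotp (u - w) v = dotp u v - dotp w v.
Proof. by rewrite dotpDl dotpNl. Qed.

Lemma dotpDr u w v : dotp v (u + w) = dotp v u + dotp v w.
Proof. by rewrite dotpC dotpDl !(dotpC v). Qed.

Lemma dotpZr a u v : dotp v (a *: u) = a * dotp v u.
Proof. by rewrite dotpC dotpZl dotpC. Qed.

Lemma dotpNr u v : dotp v (- u) = - dotp v u.
Proof. by rewrite dotpC dotpNl dotpC. Qed.

Lemma dotpBr u w v : dotp v (u - w) = dotp v u - dotp v w.
Proof. by rewrite dotpDr dotpNr. Qed.

Lemma dotpp_ge0 u : 0 <= dotp u u.
Proof. by apply: sumr_ge0 => i _; rewrite -expr2 sqr_ge0. Qed.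

Lemma dotpp_eq0 u : dotp u u = 0 -> u = 0.
Proof.
move=> /eqP; rewrite psumr_eq0 => [/allP u0|i _]; last by rewrite -expr2 sqr_ge0.
apply/rowP => i; rewrite mxE; apply/eqP.
by rewrite -sqrf_eq0 expr2 -(implyTb (_ == 0)) u0 ?mem_index_enum.
Qed.

Lemma enorm_ge0 u : 0 <= enorm u.
Proof. exact: sqrtr_ge0. Qed.

Lemma sqr_enorm u : enorm u ^+ 2 = dotp u u.
Proof. by rewrite /enorm sqr_sqrtr // dotpp_ge0. Qed.

Lemma enormZ a u : enorm (a *: u) = `|a| * enorm u.
Proof.
by rewrite /enorm dotpZl dotpZr mulrA -expr2 sqrtrM ?sqr_ge0 // sqrtr_sqr.
Qed.

Lemma enormN u : enorm (- u) = enorm u.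
Proof. by rewrite -scaleN1r enormZ normrN1 mul1r. Qed.

Lemma enorm_distC u v : enorm (u - v) = enorm (v - u).
Proof. by rewrite -enormN opprB. Qed.

Lemma dotp0l v : dotp 0 v = 0.
Proof. by rewrite -(scale0r (0 : 'rV_n)) dotpZl mul0r. Qed.

Lemma dotp0r v : dotp v 0 = 0.
Proof. by rewrite dotpC dotp0l. Qed.

Lemma enorm0 : enorm (0 : 'rV[R]_n) = 0.
Proof. by rewrite /enorm dotp0l sqrtr0. Qed.

Lemma enorm_gt0 u : u != 0 -> 0 < enorm u.
Proof.
move=> u0; rewrite lt_def enorm_ge0 andbT sqrtr_eq0 -ltNge lt_def dotpp_ge0 andbT.
by apply: contra_neq u0; apply: dotpp_eq0.
Qed.

Lemma cauchy_schwarz u v : dotp u v <= enorm u * enorm v.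
Proof.
have [->|/enorm_gt0 nu_gt0] := eqVneq u 0; first by rewrite dotp0l enorm0 mul0r.
have [->|/enorm_gt0 nv_gt0] := eqVneq v 0; first by rewrite dotp0r enorm0 mulr0.
have := dotpp_ge0 (enorm v *: u - enorm u *: v).
rewrite !(dotpBl, dotpBr, dotpZl, dotpZr) -!sqr_enorm (dotpC v u) => sq_ge0.
have : enorm u * enorm v * dotp u v <= enorm u * enorm v * (enorm u * enorm v).
  by nra.
by rewrite ler_pM2l ?mulr_gt0.
Qed.

Lemma norm_dotp_le u v : `|dotp u v| <= enorm u * enorm v.
Proof.
by rewrite ler_norml cauchy_schwarz andbT lerNl -dotpNl -(enormN u) cauchy_schwarz.
Qed.

Lemma enormD u v : enorm (u + v) <= enorm u + enorm v.
Proof.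
rewrite -(ler_pXn2r (n := 2)) // ?nnegrE ?addr_ge0 ?enorm_ge0 //.
rewrite sqr_enorm !(dotpDl, dotpDr) (dotpC v u) sqrrD -!sqr_enorm.
have := cauchy_schwarz u v; lra.
Qed.

End InnerProduct.

Lemma ge0_of_perturb (R : realFieldType) (a b : R) :
  (forall t, 0 < t < 1 -> 0 <= a + t * b) -> 0 <= a.
Proof.
move=> perturb_ge0; rewrite leNgt; apply/negP => a_lt0.
have D_gt0 : 0 < `|b| - a by have := normr_ge0 b; lra.
pose t := - a / (2 * (`|b| - a)).
have Et : t * (2 * (`|b| - a)) = - a by rewrite mulfVK // gt_eqF ?mulr_gt0.
have t_gt0 : 0 < t by rewrite divr_gt0 ?oppr_gt0 ?mulr_gt0.
have t_lt1 : t < 1.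
  by rewrite ltr_pdivrMr ?mulr_gt0 // mul1r; have := normr_ge0 b; lra.
have := perturb_ge0 t; rewrite t_gt0 t_lt1 => /(_ isT).
have := ler_wpM2l (ltW t_gt0) (ler_norm b); nra.
Qed.

Section Prox.
Variables (R : realType) (n : nat) (g : 'rV[R]_n -> \bar R) (gamma : R).
Hypotheses (g_convex : convex_efun g) (g_proper : proper_efun g).
Hypothesis gamma_gt0 : 0 < gamma.
Implicit Types x p v : 'rV[R]_n.

Lemma prox_fin_num x p : is_prox g gamma x p -> g p \is a fin_num.
Proof.
case: g_proper => g_neqNy [v gv_neqy] prox_p; rewrite fin_numE g_neqNy /=.
apply/negP => /eqP gp_y; have := prox_p v; rewrite gp_y.
have [r ->] : exists r : R, g v = r%:E.
  by move: (g_neqNy v) gv_neqy; case: (g v) => // r _ _; exists r.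
by rewrite addye //= -EFinD leye_eq.
Qed.

(* Test the optimality of [p] against [p + t (v - p)], use convexity of [g]
   and divide by [t]. *)
Lemma prox_variational_ineq x p v :
  is_prox g gamma x p -> g v \is a fin_num ->
  gamma * fine (g p) <= gamma * fine (g v) + dotp (p - x) (v - p).
Proof.
move=> prox_p gv_fin; have gp_fin := prox_fin_num prox_p.
set gp := fine (g p); set gv := fine (g v).
suff : 0 <= gamma * (gv - gp) + dotp (p - x) (v - p) by lra.
apply: ge0_of_perturb (dotp (v - p) (v - p) / 2) _ => t t01.
have /andP[t_gt0 t_lt1] := t01.
have Eq : t *: v + (1 - t) *: p - x = (p - x) + t *: (v - p).
  by apply/rowP => i; rewrite !mxE; ring.
have := le_trans (prox_p (t *: v + (1 - t) *: p))
  (leeD2r _ (g_convex v p t01)).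
rewrite Eq !sqr_enorm -(fineK gp_fin) -(fineK gv_fin) -/gp -/gv.
rewrite -!EFinM -!EFinD lee_fin; move: (p - x) (v - p) => a b.
rewrite !(dotpDl, dotpDr, dotpZl, dotpZr) (dotpC b a).
set A := dotp a a; set c := dotp a b; set B := dotp b b => prox_cvx.
have : 0 <= t * (gamma * (gv - gp) + c + t * (B / 2)).
  have -> : t * (gamma * (gv - gp) + c + t * (B / 2)) =
      gamma * ((t * gv + (1 - t) * gp + (A + t * c + (t * c + t * (t * B)))
        / (2 * gamma)) - (gp + A / (2 * gamma))).
    by field; rewrite gt_eqF.
  by rewrite mulr_ge0 ?subr_ge0 // ltW.
by rewrite pmulr_rge0.
Qed.

Lemma prox_firmly_nonexpansive x1 x2 p1 p2 :
  is_prox g gamma x1 p1 -> is_prox g gamma x2 p2 ->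
  enorm (p1 - p2) ^+ 2 <= dotp (x1 - x2) (p1 - p2).
Proof.
move=> prox1 prox2.
have VI1 := prox_variational_ineq prox1 (prox_fin_num prox2).
have VI2 := prox_variational_ineq prox2 (prox_fin_num prox1).
have Eq : x1 - x2 = (p1 - p2) - (p1 - x1) + (p2 - x2).
  by apply/rowP => i; rewrite !mxE; ring.
rewrite -(opprB p1 p2) dotpNr in VI1.
rewrite Eq sqr_enorm; move: VI1 VI2; move: (p1 - p2) (p1 - x1) (p2 - x2).
by move=> d a b VI1 VI2; rewrite dotpDl dotpBl; lra.
Qed.

Lemma prox_nonexpansive x1 x2 p1 p2 :
  is_prox g gamma x1 p1 -> is_prox g gamma x2 p2 ->
  enorm (p1 - p2) <= enorm (x1 - x2).
Proof.
move=> prox1 prox2; have [->|/enorm_gt0 d_gt0] := eqVneq (p1 - p2) 0.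
  by rewrite enorm0 enorm_ge0.
rewrite -(ler_pM2r d_gt0) -expr2.
exact: le_trans (prox_firmly_nonexpansive prox1 prox2) (cauchy_schwarz _ _).
Qed.

End Prox.

Section Smooth.
Variables (R : realType) (n : nat) (f : 'rV[R]_n -> R) (gradf : 'rV[R]_n -> 'rV[R]_n).
Variable L : R.
Hypothesis f_grad : is_gradient f gradf.
Hypothesis gradf_lip : forall x y, enorm (gradf x - gradf y) <= L * enorm (x - y).
Hypothesis L_ge0 : 0 <= L.
Implicit Types x y d : 'rV[R]_n.
Local Open Scope classical_set_scope.

Lemma is_derive_line x d (t : R) :
  is_derive t 1 (fun s : R => f (x + s *: d)) (dotp (gradf (x + t *: d)) d).
Proof.
(* [dline] is found by the [is_diff] instance search in [differentiable_comp] and [diff_comp]. *)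
have dline : is_diff t (cst x + ( *:%R ^~ d)) (0 + ( *:%R ^~ d)) by exact: is_diffD.
have [df dfE] := f_grad (x + t *: d).
have dh : differentiable (f \o (cst x + ( *:%R ^~ d))) t.
  exact: differentiable_comp.
have := derivableP (diff_derivable (v := (1 : R^o)) dh).
rewrite deriveE // diff_comp //= diff_val /=.
by rewrite add0r scale1r dfE.
Qed.

(* The constant [L] instead of the sharp [L / 2] is enough for what follows. *)
Lemma descent_lemma x y :
  `|f y - f x - dotp (gradf x) (y - x)| <= L * enorm (y - x) ^+ 2.
Proof.
set d := y - x.
have cont : {within `[0, 1], continuous (fun s : R => f (x + s *: d))}.
  apply: continuous_subspaceT => s.
  apply/differentiable_continuous/derivable1_diffP.
  by have [] := is_derive_line x d s.
have [c c01 Ec] := MVT ltr01 (fun s _ => is_derive_line x d s) cont.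
rewrite /= scale1r scale0r addr0 subr0 mulr1 (addrC x) subrK in Ec.
move: c01; rewrite in_itv /= => /andP[c_gt0 c_lt1].
rewrite Ec -dotpBl; apply: le_trans (norm_dotp_le _ _) _.
have := gradf_lip (x + c *: d) x.
rewrite (addrC x) addrK enormZ (ger0_norm (ltW c_gt0)) => lip.
have d_ge0 := enorm_ge0 d.
apply: le_trans (ler_wpM2r d_ge0 lip) _.
have : c * enorm d <= enorm d by rewrite ler_piMl // ltW.
have := mulr_ge0 L_ge0 d_ge0; nra.
Qed.

Lemma smooth_sub_le x y :
  f x - f y <= dotp (gradf x) (x - y) + 2 * L * enorm (x - y) ^+ 2.
Proof.
have := descent_lemma y x; rewrite ler_norml => /andP[_ descent].
have := norm_dotp_le (gradf x - gradf y) (x - y); rewrite ler_norml => /andP[cs _].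
have := ler_wpM2r (enorm_ge0 (x - y)) (gradf_lip x y).
by rewrite dotpBl in cs; lra.
Qed.

Lemma grad_step_lipschitz (gamma : R) x y : 0 <= gamma ->
  enorm ((x - y) - gamma *: (gradf x - gradf y)) <= (1 + gamma * L) * enorm (x - y).
Proof.
move=> gamma_ge0; apply: le_trans (enormD _ _) _.
rewrite enormN enormZ ger0_norm //.
have := ler_wpM2l gamma_ge0 (gradf_lip x y); lra.
Qed.

Section Convex.
Hypothesis f_convex : convex_fun f.
Hypothesis L_gt0 : 0 < L.

Lemma convex_gradient_ineq x y : f x + dotp (gradf x) (y - x) <= f y.
Proof.
suff : 0 <= f y - f x - dotp (gradf x) (y - x) by lra.
apply: ge0_of_perturb (L * enorm (y - x) ^+ 2) _ => t /andP[t_gt0 t_lt1].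
have := f_convex y x (t := t); rewrite (ltW t_gt0) (ltW t_lt1) => /(_ isT) cvx.
have := descent_lemma x (t *: y + (1 - t) *: x).
have -> : t *: y + (1 - t) *: x - x = t *: (y - x).
  by apply/rowP => i; rewrite !mxE; ring.
rewrite enormZ dotpZr (ger0_norm (ltW t_gt0)) ler_norml => /andP[descent _].
have : 0 <= t * (f y - f x - dotp (gradf x) (y - x) + t * (L * enorm (y - x) ^+ 2)).
  by nra.
by rewrite pmulr_rge0.
Qed.

(* Compare [y - (2L)^-1 (gradf y - gradf x)] with [x] and with [y]. *)
Lemma sqr_grad_diff_le x y :
  enorm (gradf y - gradf x) ^+ 2 <= 4 * L * (f y - f x - dotp (gradf x) (y - x)).
Proof.
set e := gradf y - gradf x; set k := (2 * L)^-1.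
have k_gt0 : 0 < k by rewrite invr_gt0 mulr_gt0.
have lower := convex_gradient_ineq x (y - k *: e).
have Ex : y - k *: e - x = (y - x) - k *: e by apply/rowP => i; rewrite !mxE; ring.
have Ey : y - k *: e - y = - (k *: e) by apply/rowP => i; rewrite !mxE; ring.
rewrite Ex dotpBr dotpZr in lower.
have := descent_lemma y (y - k *: e); rewrite ler_norml => /andP[_ upper].
rewrite Ey enormN enormZ dotpNr dotpZr (ger0_norm (ltW k_gt0)) in upper.
have Ee : enorm e ^+ 2 = dotp (gradf y) e - dotp (gradf x) e by rewrite sqr_enorm -dotpBl.
have : k * enorm e ^+ 2 - L * k ^+ 2 * enorm e ^+ 2 <= f y - f x - dotp (gradf x) (y - x).
  by move: lower upper; rewrite Ee exprMn; nra.
have -> : k * enorm e ^+ 2 - L * k ^+ 2 * enorm e ^+ 2 = enorm e ^+ 2 / (4 * L).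
  by rewrite /k; field; rewrite gt_eqF.
by rewrite ler_pdivrMr ?mulr_gt0 // mulrC.
Qed.

Lemma grad_cocoercive x y :
  enorm (gradf y - gradf x) ^+ 2 <= 2 * L * dotp (gradf y - gradf x) (y - x).
Proof.
have := sqr_grad_diff_le x y; have := sqr_grad_diff_le y x.
rewrite (enorm_distC (gradf x)) -(opprB y x) dotpNr dotpBl; lra.
Qed.

Lemma grad_step_nonexpansive (gamma : R) x y : 0 < gamma -> gamma * L <= 1 ->
  enorm ((x - y) - gamma *: (gradf x - gradf y)) <= enorm (x - y).
Proof.
move=> gamma_gt0 gammaL_le1.
rewrite -(ler_pXn2r (n := 2)) // ?nnegrE ?enorm_ge0 // !sqr_enorm.
have := grad_cocoercive y x; move: (x - y) (gradf x - gradf y) => a e.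
rewrite sqr_enorm !(dotpBl, dotpBr, dotpZl, dotpZr) (dotpC a e).
set E := dotp e e; set c := dotp e a => coco.
have E_ge0 : 0 <= E := dotpp_ge0 e.
have c_ge0 : 0 <= c.
  by have := le_trans E_ge0 coco; rewrite pmulr_rge0 // mulr_gt0.
have : gamma * E <= 2 * c.
  have := ler_wpM2l (ltW gamma_gt0) coco.
  have := ler_wpM2l (mulr_ge0 (ler0n _ 2) c_ge0) gammaL_le1; nra.
nra.
Qed.

End Convex.
End Smooth.

Section ProximalGradient.
Variables (R : realType) (n : nat) (f : 'rV[R]_n -> R) (gradf : 'rV[R]_n -> 'rV[R]_n).
Variables (g : 'rV[R]_n -> \bar R) (L gamma : R).
Hypothesis f_grad : is_gradient f gradf.
Hypothesis gradf_lip : forall x y, enorm (gradf x - gradf y) <= L * enorm (x - y).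
Hypotheses (L_ge0 : 0 <= L) (gamma_gt0 : 0 < gamma).
Hypotheses (g_convex : convex_efun g) (g_proper : proper_efun g).
Variables theta H T S : 'rV[R]_n.
Hypothesis prox_T : is_prox g gamma (theta - gamma *: gradf theta) T.
Hypothesis prox_S : is_prox g gamma (theta - gamma *: H) S.

Local Notation eta := (H - gradf theta).
Local Notation w := ((theta - T) - gamma *: (gradf theta - gradf T)).
Local Notation F x := (f x + fine (g x)).

Lemma prox_grad_perturb_le : enorm (T - S) <= gamma * enorm eta.
Proof.
have := prox_nonexpansive g_convex g_proper gamma_gt0 prox_T prox_S.
have -> : theta - gamma *: gradf theta - (theta - gamma *: H) = gamma *: eta.
  by apply/rowP => i; rewrite !mxE; ring.
by rewrite enormZ ger0_norm // ltW.
Qed.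

Lemma composite_gap_upper : gamma * L <= 1 ->
  F S - F T <= enorm eta * (gamma * enorm eta + enorm w).
Proof.
move=> gammaL_le1; rewrite -(ler_pM2l gamma_gt0).
have VI := prox_variational_ineq g_convex g_proper gamma_gt0 prox_S
  (prox_fin_num g_proper prox_T).
have E : S - (theta - gamma *: H) = - (T - S) - w + gamma *: eta + gamma *: gradf T.
  by apply/rowP => i; rewrite !mxE; ring.
rewrite E !dotpDl !dotpNl !dotpZl -sqr_enorm in VI.
have := descent_lemma f_grad gradf_lip L_ge0 T S.
rewrite ler_norml enorm_distC -(opprB T S) dotpNr => /andP[_ descent].
have d_le := prox_grad_perturb_le.
have := norm_dotp_le w (T - S); rewrite ler_norml => /andP[w_le _].
have := norm_dotp_le eta (T - S); rewrite ler_norml => /andP[_ eta_le].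
set d := enorm (T - S) in descent d_le w_le eta_le VI *.
set e := enorm eta in d_le eta_le *.
have e_ge0 : 0 <= e := enorm_ge0 _.
have := ler_wpM2l (enorm_ge0 w) d_le.
have := ler_wpM2l (mulr_ge0 (ltW gamma_gt0) e_ge0) d_le.
have := ler_wpM2r (sqr_ge0 d) gammaL_le1.
have := ler_wpM2l (ltW gamma_gt0) descent.
have := ler_wpM2l (ltW gamma_gt0) eta_le.
lra.
Qed.

Lemma composite_gap_lower (K : R) : 0 <= K ->
  f T - f S <= dotp (gradf T) (T - S) + K * enorm (T - S) ^+ 2 ->
  F T - F S <= enorm eta * (K * gamma ^+ 2 * enorm eta + enorm w).
Proof.
move=> K_ge0 f_le; rewrite -(ler_pM2l gamma_gt0).
have VI := prox_variational_ineq g_convex g_proper gamma_gt0 prox_T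
  (prox_fin_num g_proper prox_S).
have E : T - (theta - gamma *: gradf theta) = gamma *: gradf T - w.
  by apply/rowP => i; rewrite !mxE; ring.
rewrite E -(opprB T S) dotpNr dotpBl dotpZl in VI.
have := norm_dotp_le w (T - S); rewrite ler_norml => /andP[_ w_le].
have d_le := prox_grad_perturb_le.
set d := enorm (T - S) in f_le w_le d_le *.
set e := enorm eta in d_le *.
have d_ge0 : 0 <= d := enorm_ge0 _.
have sqr_d_le : d ^+ 2 <= (gamma * e) ^+ 2.
  by rewrite ler_pXn2r // ?nnegrE // (le_trans d_ge0).
have := ler_wpM2l (enorm_ge0 w) d_le.
have := ler_wpM2l (mulr_ge0 (ltW gamma_gt0) K_ge0) sqr_d_le.
have := ler_wpM2l (ltW gamma_gt0) f_le.
lra.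
Qed.

Lemma composite_gap_le (K C : R) : gamma * L <= 1 -> 0 <= K -> K * gamma <= C ->
  1 <= C -> enorm w <= C * enorm (theta - T) ->
  f T - f S <= dotp (gradf T) (T - S) + K * enorm (T - S) ^+ 2 ->
  (`| ((f S)%:E + g S) - ((f T)%:E + g T) |
    <= (C * enorm eta * (gamma * enorm eta + C * enorm (theta - T)))%:E)%E.
Proof.
move=> gammaL_le1 K_ge0 KC C_ge1 w_le f_le.
rewrite -(fineK (prox_fin_num g_proper prox_S)) -(fineK (prox_fin_num g_proper prox_T)).
rewrite -!EFinD /= lee_fin ler_norml.
have upper := composite_gap_upper gammaL_le1.
have lower := composite_gap_lower K_ge0 f_le.
set e := enorm eta in upper lower *; set r := enorm (theta - T) in w_le *.
have e_ge0 : 0 <= e := enorm_ge0 _.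
have r_ge0 : 0 <= r := enorm_ge0 _.
have sqr_e_ge0 : 0 <= gamma * e ^+ 2 by rewrite mulr_ge0 ?sqr_ge0 // ltW.
have := ler_wpM2l e_ge0 w_le.
have := ler_wpM2r (mulr_ge0 e_ge0 r_ge0) C_ge1.
have := ler_wpM2r (mulr_ge0 (mulr_ge0 (le_trans ler01 C_ge1) e_ge0) r_ge0) C_ge1.
have := ler_wpM2r sqr_e_ge0 C_ge1.
have := ler_wpM2r sqr_e_ge0 KC.
move=> *; apply/andP; split; nra.
Qed.

End ProximalGradient.

Unset Implicit Arguments.

Theorem lemma14 (R : realType) (n : nat)
  (f : 'rV[R]_n -> R) (gradf : 'rV[R]_n -> 'rV[R]_n) (g : 'rV[R]_n -> \bar R)
  (L : R)
  (Hg_convex : convex_efun g) (Hg_proper : proper_efun g) (Hg_lsc : lsc g)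
  (Hf_grad : is_gradient f gradf) (HL : 0 < L)
  (Hf_lip : forall x y, enorm (gradf x - gradf y) <= L * enorm (x - y)) :
  forall (theta H : 'rV[R]_n) (gamma : R) (T S : 'rV[R]_n),
    0 < gamma ->
    is_prox g gamma (theta - gamma *: gradf theta) T ->
    is_prox g gamma (theta - gamma *: H) S ->
    let eta := H - gradf theta in
    let bound (c : R) :=
      (1 + c * gamma * L) * enorm eta
        * (gamma * enorm eta + (1 + c * gamma * L) * enorm (theta - T)) in
    let gap := (`| ((f S)%:E + g S) - ((f T)%:E + g T) |)%E in
    [/\ enorm (T - S) <= gamma * enorm eta,
        gamma <= L^-1 -> (gap <= (bound 1)%:E)%E
      & gamma <= L^-1 -> convex_fun f -> (gap <= (bound 0)%:E)%E].
Proof.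
move=> theta H gamma T S gamma_gt0 prox_T prox_S eta bound gap.
have gap_le := composite_gap_le Hf_grad Hf_lip (ltW HL) gamma_gt0 Hg_convex Hg_proper
  prox_T prox_S.
have gammaL_le1 : gamma <= L^-1 -> gamma * L <= 1 by rewrite -[L^-1]mul1r ler_pdivlMr.
split=> [|/gammaL_le1 gammaL|/gammaL_le1 gammaL f_convex].
- exact: (prox_grad_perturb_le gamma_gt0 Hg_convex Hg_proper prox_T prox_S).
- apply: (gap_le (2 * L)) => //; rewrite ?mul1r.
  + by rewrite mulr_ge0 // ltW.
  + lra.
  + by rewrite lerDl mulr_ge0 // ltW.
  + exact: (grad_step_lipschitz Hf_lip _ _ (ltW gamma_gt0)).
  + exact: (smooth_sub_le Hf_grad Hf_lip (ltW HL) T S).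
- apply: (gap_le 0) => //; rewrite ?mul0r ?addr0 ?mul1r //.
  + exact: (grad_step_nonexpansive Hf_grad Hf_lip (ltW HL) f_convex HL _ _ gamma_gt0 gammaL).
  + have := convex_gradient_ineq Hf_grad Hf_lip (ltW HL) f_convex T S.
    by rewrite -(opprB T S) dotpNr; lra.
Qed.
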